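(* Let $(\mathfrak g,J)$ be a real Lie algebra with integrable complex structure and let $\rho:\mathfrak g\to\operatorname{End}E$ be an integrable representation on a real vector space $E$ with complex structure $I$. Then the bilinear map \[\delta:\mathfrak g^{0,1}\times E^{1,0}\to E^{1,0},\qquad(\bar X,V)\mapsto(\rho(\bar X)V)^{1,0},\] where $(\cdot)^{1,0}$ denotes the projection $E_{\mathbb C}\to E^{1,0}$ along $E^{0,1}$, is a $\mathbb C$-linear representation of the complex Lie algebra $\mathfrak g^{0,1}$ on $E^{1,0}$.
   Context: A complex structure on a real Lie algebra $\mathfrak g$ is $J$ with $J^2=-\mathrm{id}$ satisfying $[x,y]-[Jx,Jy]+J[Jx,y]+J[x,Jy]=0$. $\mathfrak g_{\mathbb C}=\mathfrak g^{1,0}\oplus\mathfrak g^{0,1}$ and $E_{\mathbb C}=E^{1,0}\oplus E^{0,1}$ are the $\pm i$-eigenspace decompositions of $J$ and $I$; $\rho$ is extended $\mathbb C$-linearly. The representation $\rho$ is called integrable if $[I,\rho(Jx)]+I[\rho(x),I]=0$ for all $x\in\mathfrak g$. *)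

(* real vector spaces are lmodType R for R : realType;
   complexifications V_C are modelled as V * V  (pair (u,v) = u + i v),
   complex scalars are elements of R[i] (mathcomp-real-closed complex). *)
From HB Require Import structures.
From mathcomp Require Import all_boot all_order all_algebra.
From mathcomp Require Import reals.
From mathcomp Require Import complex.
Set Implicit Arguments. Unset Strict Implicit. Unset Printing Implicit Defensive.
Import Order.TTheory GRing.Theory Num.Theory.
Local Open Scope ring_scope.

Section RealDefs.
Variable R : realType.

Definition is_real_lie (g : lmodType R) (br : g -> g -> g) : Prop :=
  [/\ (forall (a : R) x y z, br (a *: x + y) z = a *: br x z + br y z),
      (forall (a : R) x y z, br x (a *: y + z) = a *: br x y + br x z),
      (forall x, br x x = 0) &
      (forall x y z, br x (br y z) + br y (br z x) + br z (br x y) = 0)].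

Definition is_lin_cs (V : lmodType R) (f : V -> V) : Prop :=
  (forall (a : R) x y, f (a *: x + y) = a *: f x + f y) /\
  (forall x, f (f x) = - x).

(* complex structure on a Lie algebra: J^2 = -id and Nijenhuis tensor vanishes *)
Definition is_lie_cs (g : lmodType R) (br : g -> g -> g) (J : g -> g) : Prop :=
  is_lin_cs J /\
  (forall x y, br x y - br (J x) (J y) + J (br (J x) y) + J (br x (J y)) = 0).

Definition is_rep (g E : lmodType R) (br : g -> g -> g) (rho : g -> E -> E) : Prop :=
  [/\ (forall (a : R) x y v, rho (a *: x + y) v = a *: rho x v + rho y v),
      (forall (a : R) x v w, rho x (a *: v + w) = a *: rho x v + rho x w) &
      (forall x y v, rho (br x y) v = rho x (rho y v) - rho y (rho x v))].

Definition integrable_rep (g E : lmodType R) (J : g -> g) (I : E -> E)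
    (rho : g -> E -> E) : Prop :=
  forall x v,
    (I (rho (J x) v) - rho (J x) (I v)) + I (rho x (I v) - I (rho x v)) = 0.

Definition cplx (V : lmodType R) := (V * V)%type.

Definition cadd (V : lmodType R) (w1 w2 : cplx V) : cplx V :=
  (w1.1 + w2.1, w1.2 + w2.2).
Definition csub (V : lmodType R) (w1 w2 : cplx V) : cplx V :=
  (w1.1 - w2.1, w1.2 - w2.2).
(* complex scalar multiplication (a + i b)(u + i v) *)
Definition cscale (V : lmodType R) (z : R[i]) (w : cplx V) : cplx V :=
  (complex.Re z *: w.1 - complex.Im z *: w.2,
   complex.Re z *: w.2 + complex.Im z *: w.1).
Definition imul (V : lmodType R) (w : cplx V) : cplx V := (- w.2, w.1).
Definition cext (V : lmodType R) (f : V -> V) (w : cplx V) : cplx V :=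
  (f w.1, f w.2).
Definition cbr (g : lmodType R) (br : g -> g -> g) (X Y : cplx g) : cplx g :=
  (br X.1 Y.1 - br X.2 Y.2, br X.1 Y.2 + br X.2 Y.1).
Definition crho (g E : lmodType R) (rho : g -> E -> E) (X : cplx g) (w : cplx E)
  : cplx E :=
  (rho X.1 w.1 - rho X.2 w.2, rho X.1 w.2 + rho X.2 w.1).

Definition sp10 (V : lmodType R) (f : V -> V) (w : cplx V) : Prop :=
  cext f w = imul w.
Definition sp01 (V : lmodType R) (f : V -> V) (w : cplx V) : Prop :=
  cext f w = - imul w.

Definition proj10 (V : lmodType R) (f : V -> V) (w : cplx V) : cplx V :=
  let p := csub w (imul (cext f w)) in (2^-1 *: p.1, 2^-1 *: p.2).

Definition delta (g E : lmodType R) (rho : g -> E -> E) (I : E -> E)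
    (X : cplx g) (v : cplx E) : cplx E :=
  proj10 I (crho rho X v).

End RealDefs.

From HB Require Import structures.
From mathcomp Require Import all_boot all_order all_algebra.
From mathcomp Require Import reals complex ssrAC.
Set Implicit Arguments.
Unset Strict Implicit.
Unset Printing Implicit Defensive.
Import GRing.Theory Num.Theory.
Local Open Scope ring_scope.

(** For [X] in g^{0,1}, integrability of [rho] says precisely that the
    complexified [rho X] maps E^{0,1} into itself; for the adjoint
    representation this is the vanishing of the Nijenhuis tensor, so g^{0,1}
    is a subalgebra. Since E_C = E^{1,0} + E^{0,1} and the projection onto
    E^{1,0} kills E^{0,1}, it makes no difference whether one projects before
    or after applying [rho X]: (rho X (rho Y V)^{1,0})^{1,0} =
    (rho X (rho Y V))^{1,0}. So delta inherits the bracket identity from the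
    complexified representation, and it is C-bilinear because the
    complexification and the projection commute with multiplication by i. *)

Section Complexification.
Variable R : realType.

Lemma cplx_eq (V : lmodType R) (w1 w2 : cplx V) :
  w1.1 = w2.1 -> w1.2 = w2.2 -> w1 = w2.
Proof. by case: w1 w2 => [? ?] [? ?] /= -> ->. Qed.

Lemma scale_half_double (V : lmodType R) (v : V) : 2^-1 *: (v + v) = v.
Proof. by rewrite -mulr2n -scaler_nat scalerA mulVf ?scale1r ?pnatr_eq0. Qed.

Lemma cscaleE (V : lmodType R) (z : R[i]) (w : cplx V) :
  cscale z w = complex.Re z *: w + complex.Im z *: imul w.
Proof. by apply: cplx_eq; cbn; rewrite ?scalerN. Qed.

Lemma cscale_morph (V W : lmodType R) (F : cplx V -> cplx W) :
    {morph F : w1 w2 / w1 + w2} -> (forall a : R, {morph F : w / a *: w}) ->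
    {morph F : w / imul w} -> forall z, {morph F : w / cscale z w}.
Proof. by move=> FD FZ Fimul z w; rewrite !cscaleE FD !FZ Fimul. Qed.

Section Eigenspaces.
Variables (V : lmodType R) (f : V -> V).

Lemma sp01_snd w : sp01 f w -> w.2 = f w.1.
Proof. by move/(congr1 fst); cbn => ->; rewrite opprK. Qed.

Lemma sp01P w : (forall x, f (f x) = - x) -> sp01 f w <-> w.2 = f w.1.
Proof.
move=> fK; split; first exact: sp01_snd.
by case: w => u v /= ->; apply: cplx_eq; cbn; rewrite ?fK ?opprK.
Qed.

End Eigenspaces.

Section Projections.
Variables (E : lmodType R) (I : {linear E -> E}).
Hypothesis IK : forall x, I (I x) = - x.
Implicit Types (w : cplx E) (z : R[i]).

Definition proj01 w : cplx E := (2^-1 *: (w.1 - I w.2), 2^-1 *: (w.2 + I w.1)).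

Lemma proj10_add_proj01 w : proj10 I w + proj01 w = w.
Proof.
apply: cplx_eq; cbn; rewrite ?opprK -scalerDr addrACA ?subrr ?addNr addr0.
all: exact: scale_half_double.
Qed.

Lemma sp01_proj01 w : sp01 I (proj01 w).
Proof.
apply/(sp01P _ IK); cbn.
by rewrite linearZ linearB IK opprK addrC.
Qed.

Lemma sp10_proj10 w : sp10 I (proj10 I w).
Proof.
apply: cplx_eq; cbn; rewrite (linearZZ I) !opprK.
  by rewrite (linearD I) IK -scalerN opprB addrC.
by rewrite (linearB I) IK opprK addrC.
Qed.

Lemma proj10_sp01 w : sp01 I w -> proj10 I w = 0.
Proof.
move/(sp01P _ IK) => w2; apply: cplx_eq; cbn.
  by rewrite w2 IK opprK subrr scaler0.
by rewrite w2 subrr scaler0.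
Qed.

Lemma proj10D w1 w2 : proj10 I (w1 + w2) = proj10 I w1 + proj10 I w2.
Proof.
by apply: cplx_eq; cbn; rewrite ?opprK (linearD I) ?opprD addrACA scalerDr.
Qed.

Lemma proj10Z (a : R) w : proj10 I (a *: w) = a *: proj10 I w.
Proof.
apply: cplx_eq; cbn; rewrite ?opprK (linearZZ I).
all: by rewrite -?scalerDr -?scalerBr !scalerA mulrC.
Qed.

Lemma proj10B w1 w2 : proj10 I (w1 - w2) = proj10 I w1 - proj10 I w2.
Proof. by rewrite proj10D -scaleN1r proj10Z scaleN1r. Qed.

Lemma proj10_imul w : proj10 I (imul w) = imul (proj10 I w).
Proof.
apply: cplx_eq; cbn; first by rewrite opprK -scalerN opprB addrC.
by rewrite (linearN I).
Qed.

Lemma proj10_cscale z w : proj10 I (cscale z w) = cscale z (proj10 I w).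
Proof. exact: cscale_morph proj10D proj10Z proj10_imul z w. Qed.

End Projections.

Section ComplexifiedBilinear.
Variables (U V : lmodType R) (f : {bilinear U -> V -> V}).
Implicit Types (X Y : cplx U) (w v : cplx V) (z : R[i]).

Lemma crhoDl X Y w : crho f (X + Y) w = crho f X w + crho f Y w.
Proof. by apply: cplx_eq; cbn; rewrite !linearDl ?opprD addrACA. Qed.

Lemma crhoZl (a : R) X w : crho f (a *: X) w = a *: crho f X w.
Proof. by apply: cplx_eq; cbn; rewrite !linearZl_LR (scalerBr, scalerDr). Qed.

Lemma crho_imull X w : crho f (imul X) w = imul (crho f X w).
Proof. by apply: cplx_eq; cbn; rewrite !linearNl ?opprD addrC. Qed.

Lemma crhoDr X w v : crho f X (w + v) = crho f X w + crho f X v.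
Proof. by apply: cplx_eq; cbn; rewrite !linearDr ?opprD addrACA. Qed.

Lemma crhoZr (a : R) X w : crho f X (a *: w) = a *: crho f X w.
Proof. by apply: cplx_eq; cbn; rewrite !linearZr_LR (scalerBr, scalerDr). Qed.

Lemma crho_imulr X w : crho f X (imul w) = imul (crho f X w).
Proof. by apply: cplx_eq; cbn; rewrite linearNr ?opprD. Qed.

Lemma crho_cscalel z X w : crho f (cscale z X) w = cscale z (crho f X w).
Proof.
exact: (cscale_morph (fun X Y => crhoDl X Y w) (fun a X => crhoZl a X w)
  (fun X => crho_imull X w)).
Qed.

Lemma crho_cscaler z X w : crho f X (cscale z w) = cscale z (crho f X w).
Proof. exact: cscale_morph (crhoDr X) (crhoZr ^~ X) (crho_imulr X) z w. Qed.

End ComplexifiedBilinear.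

Section ComplexifiedRepresentation.
Variables (g E : lmodType R) (br : g -> g -> g).
Variable rho : {bilinear g -> E -> E}.
Hypothesis rho_br :
  forall x y v, rho (br x y) v = rho x (rho y v) - rho y (rho x v).

Lemma crho_cbr X Y w :
  crho rho (cbr br X Y) w =
  crho rho X (crho rho Y w) - crho rho Y (crho rho X w).
Proof.
apply: cplx_eq; cbn; rewrite !linearBl !linearDl !rho_br !linearBr !linearDr.
all: by rewrite !opprD !opprK !addrA [LHS](ACl (1*5*7*3*2*8*6*4)%AC).
Qed.
End ComplexifiedRepresentation.

Section Integrability.
Variables (g E : lmodType R) (J : g -> g) (I : {linear E -> E}).
Variable rho : {bilinear g -> E -> E}.
Hypotheses (IK : forall v, I (I v) = - v) (rho_int : integrable_rep J I rho).

Lemma crho_sp01 X w : sp01 J X -> sp01 I w -> sp01 I (crho rho X w).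
Proof.
move=> /sp01_snd X2 /(sp01P _ IK) w2; apply/(sp01P _ IK).
rewrite /crho /= X2 w2.
(* integrability at [I w.1] is the required identity, rearranged *)
have := rho_int X.1 (I w.1).
rewrite !IK !linearNr (linearB I) (linearN I) IK !opprK => int_w.
apply/eqP; rewrite (linearB I) -subr_eq0 -int_w opprB !addrA.
by rewrite [X in X == _](ACl (3*2*4*1)%AC).
Qed.

Lemma proj10_crho_proj10 X w :
  sp01 J X -> proj10 I (crho rho X (proj10 I w)) = proj10 I (crho rho X w).
Proof.
move=> X01; rewrite -[in RHS](proj10_add_proj01 I w) crhoDr proj10D.
by rewrite (proj10_sp01 IK (crho_sp01 X01 (sp01_proj01 IK w))) addr0.
Qed.

End Integrability.

Lemma nijenhuis_integrable_ad (g : lmodType R) (br : g -> g -> g)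
    (J : {linear g -> g}) :
  (forall x, J (J x) = - x) ->
  (forall x y, br x y - br (J x) (J y) + J (br (J x) y) + J (br x (J y)) = 0) ->
  integrable_rep J J br.
Proof.
move=> JK nij x v; rewrite -[RHS](nij x v) (linearB J) JK opprK !addrA.
by rewrite [LHS](ACl (4*2*1*3)%AC).
Qed.

End Complexification.

Section DeltaRepresentation.
Variables (R : realType) (g E : lmodType R) (br : g -> g -> g) (J : g -> g).
Variables (rho : g -> E -> E) (I : E -> E).
Hypotheses (br_lie : is_real_lie br) (J_cs : is_lie_cs br J).
Hypotheses (rho_rep : is_rep br rho) (I_cs : is_lin_cs I).
Hypothesis rho_int : integrable_rep J I rho.

Let br_bilinear : bilinear_for *:%R *:%R br.
Proof.
by case: br_lie => brDl brDr _ _; split=> [y a x x'|x a y y'];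
  [exact: brDl | exact: brDr].
Qed.

Let rho_bilinear : bilinear_for *:%R *:%R rho.
Proof.
by case: rho_rep => rhoDl rhoDr _; split=> [v a x x'|x a v v'];
  [exact: rhoDl | exact: rhoDr].
Qed.

HB.instance Definition _ :=
  bilinear_isBilinear.Build R g g g *:%R *:%R br br_bilinear.
HB.instance Definition _ :=
  bilinear_isBilinear.Build R g E E *:%R *:%R rho rho_bilinear.
HB.instance Definition _ := GRing.isLinear.Build R g g *:%R J J_cs.1.1.
HB.instance Definition _ := GRing.isLinear.Build R E E *:%R I I_cs.1.

Lemma sp01_cbr X Y : sp01 J X -> sp01 J Y -> sp01 J (cbr br X Y).
Proof.
exact: (crho_sp01 (I := J) (rho := br) J_cs.1.2
  (nijenhuis_integrable_ad J_cs.1.2 J_cs.2)).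
Qed.

Lemma sp10_delta X v : sp10 I (delta rho I X v).
Proof. exact: (sp10_proj10 (I := I) I_cs.2). Qed.

Lemma deltaDl X Y v :
  delta rho I (cadd X Y) v = cadd (delta rho I X v) (delta rho I Y v).
Proof. by rewrite /delta crhoDl proj10D. Qed.

Lemma deltaDr X v w :
  delta rho I X (cadd v w) = cadd (delta rho I X v) (delta rho I X w).
Proof. by rewrite /delta crhoDr proj10D. Qed.

Lemma delta_cscalel z X v :
  delta rho I (cscale z X) v = cscale z (delta rho I X v).
Proof. by rewrite /delta crho_cscalel proj10_cscale. Qed.

Lemma delta_cscaler z X v :
  delta rho I X (cscale z v) = cscale z (delta rho I X v).
Proof. by rewrite /delta crho_cscaler proj10_cscale. Qed.

Lemma delta_cbr X Y v : sp01 J X -> sp01 J Y ->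
  delta rho I (cbr br X Y) v =
  csub (delta rho I X (delta rho I Y v)) (delta rho I Y (delta rho I X v)).
Proof.
move=> X01 Y01; have [_ _ rho_br] := rho_rep.
rewrite /delta crho_cbr // proj10B.
by rewrite (proj10_crho_proj10 I_cs.2 rho_int _ X01)
  (proj10_crho_proj10 I_cs.2 rho_int _ Y01).
Qed.

End DeltaRepresentation.

Theorem mainTheorem3 (R : realType) (g E : lmodType R) (br : g -> g -> g)
    (J : g -> g) (rho : g -> E -> E) (I : E -> E) :
  is_real_lie br -> is_lie_cs br J -> is_rep br rho -> is_lin_cs I ->
  integrable_rep J I rho ->
  (forall X Y, sp01 J X -> sp01 J Y -> sp01 J (cbr br X Y)) /\
  (forall X v, sp01 J X -> sp10 I v -> sp10 I (delta rho I X v)) /\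
  (forall X Y v, sp01 J X -> sp01 J Y -> sp10 I v ->
     delta rho I (cadd X Y) v = cadd (delta rho I X v) (delta rho I Y v)) /\
  (forall (z : R[i]) X v, sp01 J X -> sp10 I v ->
     delta rho I (cscale z X) v = cscale z (delta rho I X v)) /\
  (forall X v w, sp01 J X -> sp10 I v -> sp10 I w ->
     delta rho I X (cadd v w) = cadd (delta rho I X v) (delta rho I X w)) /\
  (forall (z : R[i]) X v, sp01 J X -> sp10 I v ->
     delta rho I X (cscale z v) = cscale z (delta rho I X v)) /\
  (forall X Y v, sp01 J X -> sp01 J Y -> sp10 I v ->
     delta rho I (cbr br X Y) v =
     csub (delta rho I X (delta rho I Y v)) (delta rho I Y (delta rho I X v))).
Proof.
move=> br_lie J_cs rho_rep I_cs rho_int.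
split; first exact: sp01_cbr br_lie J_cs.
split; first by move=> X v _ _; exact: (sp10_delta rho I_cs X v).
split; first by move=> X Y v _ _ _; exact: (deltaDl rho_rep I_cs X Y v).
split; first by move=> z X v _ _; exact: (delta_cscalel rho_rep I_cs z X v).
split; first by move=> X v w _ _ _; exact: (deltaDr rho_rep I_cs X v w).
split; first by move=> z X v _ _; exact: (delta_cscaler rho_rep I_cs z X v).
by move=> X Y v X01 Y01 _; exact: (delta_cbr rho_rep I_cs rho_int v X01 Y01).
Qed.
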